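(* Let $G$ be a nonabelian group and let $\psi_1,\dots,\psi_t\in\operatorname{End}(G)$ satisfy $\psi_i([G,G])\le Z(G)$ for all $i$ and $[\psi_i(G),\psi_j(G)]\subseteq Z(G)$ for all $1\le i,j\le t$. Fix $1\le i,j\le t$ and $\alpha,\beta\in\mathscr{E}$, and write $\circ_i=\circ_{\psi_i,\alpha}$, $\circ_j=\circ_{\psi_j,\beta}$. For $g\in G$ let $\widetilde g$ be the inverse of $g$ in $(G,\circ_i)$ and $\overline g$ the inverse of $g$ in $(G,\circ_j)$. Then \[R(g,h)=\Big(\widetilde g\circ_i(g\circ_j h),\ \overline{\widetilde g\circ_i(g\circ_j h)}\circ_j g\circ_j h\Big),\qquad R'(g,h)=\Big((g\circ_j h)\circ_i\widetilde g,\ \overline{(g\circ_j h)\circ_i\widetilde g}\circ_j g\circ_j h\Big)\] are mutually inverse non-degenerate set-theoretic solutions to the Yang–Baxter equation on $G$. Furthermore, $R$ is involutive (and hence $R'=R$) if and only if $(G,\circ_i)$ is abelian.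
   Context: $Z(G)$ is the center and $[G,G]$ the commutator subgroup. $\mathscr{E}$ denotes the set of formal expressions $\alpha=n_1\phi_1+\cdots+n_s\phi_s$ with $n_k\in\mathbb Z$, $\phi_k\in\operatorname{End}(G)$ (free group on $\operatorname{End}(G)$, written additively), acting on $G$ by $\alpha(g)=\phi_1(g^{n_1})\cdots\phi_s(g^{n_s})$. For $\psi\in\operatorname{End}(G)$ and $\alpha\in\mathscr{E}$, $g\circ_{\psi,\alpha}h=g\,\psi(\alpha(g))\,h\,\psi(\alpha(g))^{-1}$; these are group operations on $G$. A set-theoretic solution to the Yang–Baxter equation on a set $X$ is a map $R:X\times X\to X\times X$ with $(R\times\mathrm{id})(\mathrm{id}\times R)(R\times\mathrm{id})=(\mathrm{id}\times R)(R\times\mathrm{id})(\mathrm{id}\times R)$ on $X^3$; it is non-degenerate if, writing $R(x,y)=(\sigma_x(y),\tau_y(x))$, all maps $\sigma_x$ and $\tau_y$ are bijections; it is involutive if $R^2=\mathrm{id}$. *)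

From mathcomp Require Import all_boot.
From Stdlib Require Import ZArith List ClassicalEpsilon.
Local Open Scope nat_scope.

Set Implicit Arguments.
Unset Strict Implicit.
Unset Printing Implicit Defensive.

Section GroupDefs.
Variables (G : Type) (mul : G -> G -> G) (e : G) (inv : G -> G).

Definition is_group : Prop :=
  [/\ (forall x y z, mul x (mul y z) = mul (mul x y) z),
      (forall x, mul e x = x /\ mul x e = x) &
      (forall x, mul (inv x) x = e /\ mul x (inv x) = e)].

Definition is_abelian_op (op : G -> G -> G) : Prop := forall x y, op x y = op y x.

Definition is_endo (f : G -> G) : Prop := forall x y, f (mul x y) = mul (f x) (f y).

Definition central (z : G) : Prop := forall x, mul z x = mul x z.

Definition commg (x y : G) : G := mul (mul (inv x) (inv y)) (mul x y).

(* [A,B]: the subgroup generated by the commutators [a,b], a in A, b in B,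
   i.e. finite products of such commutators and their inverses. *)
Inductive comm_sub (A B : G -> Prop) : G -> Prop :=
  | cs_one : comm_sub A B e
  | cs_comm a b z : A a -> B b -> comm_sub A B z -> comm_sub A B (mul (commg a b) z)
  | cs_commV a b z : A a -> B b -> comm_sub A B z ->
                     comm_sub A B (mul (inv (commg a b)) z).

Definition derived : G -> Prop := comm_sub (fun _ => True) (fun _ => True).

Definition image_of (f : G -> G) : G -> Prop := fun y => exists x, y = f x.

Definition zpow (g : G) (n : Z) : G :=
  match n with
  | Z0 => e
  | Zpos p => ssrnat.iter (Pos.to_nat p)%nat (mul g) e
  | Zneg p => inv (ssrnat.iter (Pos.to_nat p)%nat (mul g) e)
  end.

(* Formal expressions alpha = n_1 phi_1 + ... + n_s phi_s, represented as the
   list of pairs (n_k, phi_k); well-formed when every phi_k is an endomorphism. *)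
Definition expr := list (Z * (G -> G)).
Definition expr_wf (a : expr) : Prop := forall p, In p a -> is_endo p.2.

Definition expr_act (a : expr) (g : G) : G :=
  fold_right (fun p acc => mul (p.2 (zpow g p.1)) acc) e a.

Definition circ (psi : G -> G) (a : expr) (g h : G) : G :=
  mul (mul (mul g (psi (expr_act a g))) h) (inv (psi (expr_act a g))).

Definition op_inv (op : G -> G -> G) (g : G) : G :=
  epsilon (inhabits e) (fun h => op g h = e /\ op h g = e).

End GroupDefs.

Section YBE.
Variable X : Type.
Definition R12 (R : X * X -> X * X) (t : X * X * X) : X * X * X :=
  let '(x, y, z) := t in let '(a, b) := R (x, y) in (a, b, z).
Definition R23 (R : X * X -> X * X) (t : X * X * X) : X * X * X :=
  let '(x, y, z) := t in let '(a, b) := R (y, z) in (x, a, b).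
Definition is_YBE_solution (R : X * X -> X * X) : Prop :=
  forall t, R12 R (R23 R (R12 R t)) = R23 R (R12 R (R23 R t)).
Definition non_degenerate (R : X * X -> X * X) : Prop :=
  (forall x, bijective (fun y => (R (x, y)).1)) /\
  (forall y, bijective (fun x => (R (x, y)).2)).
Definition involutive_sol (R : X * X -> X * X) : Prop := forall p, R (R p) = p.
End YBE.

(* Put c(g) = ψ_i(α(g)) and d(g) = ψ_j(β(g)). Since the images ψ_k(G) commute modulo
   Z(G), c and d are homomorphisms from G to an abelian subgroup of G/Z(G), so conjugation
   by c(g) depends only on c(g) modulo Z(G). Hence g ∘_i h = g · c(g) h c(g)^-1 is a group
   law, and the same computation modulo the centre gives the skew brace identity
   g ∘_j (h ∘_i k) = (g ∘_j h) ∘_i g~ ∘_i (g ∘_j k). So R is the Guarnieri–Vendramin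
   solution of the skew brace (G, ∘_i, ∘_j) and R' that of its opposite brace; these are
   non-degenerate and mutually inverse, and R is involutive exactly when the additive
   group (G, ∘_i) is abelian. *)

From Pilot Require Import Defs.
From mathcomp Require Import all_boot.
From Stdlib Require Import ZArith List.
From Stdlib Require Import ClassicalEpsilon FunctionalExtensionality Setoid Morphisms.

Set Implicit Arguments.
Unset Strict Implicit.
Unset Printing Implicit Defensive.

Section GroupTheory.
Variables (G : Type) (mul : G -> G -> G) (e : G) (inv : G -> G).
Hypothesis HG : is_group mul e inv.

Lemma mulgA x y z : mul x (mul y z) = mul (mul x y) z.
Proof. by case: HG. Qed.
Lemma mul1g x : mul e x = x.
Proof. by case: HG => _ H _; case: (H x). Qed.
Lemma mulg1 x : mul x e = x.
Proof. by case: HG => _ H _; case: (H x). Qed.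
Lemma mulVg x : mul (inv x) x = e.
Proof. by case: HG => _ _ H; case: (H x). Qed.
Lemma mulgV x : mul x (inv x) = e.
Proof. by case: HG => _ _ H; case: (H x). Qed.
Lemma mulKg x y : mul (inv x) (mul x y) = y.
Proof. by rewrite mulgA mulVg mul1g. Qed.
Lemma mulKVg x y : mul x (mul (inv x) y) = y.
Proof. by rewrite mulgA mulgV mul1g. Qed.
Lemma mulgK x y : mul (mul x y) (inv y) = x.
Proof. by rewrite -mulgA mulgV mulg1. Qed.
Lemma mulgKV x y : mul (mul x (inv y)) y = x.
Proof. by rewrite -mulgA mulVg mulg1. Qed.
Lemma mulgI x : injective (mul x).
Proof. by move=> y y' E; rewrite -(mulKg x y) E mulKg. Qed.
Lemma mulIg x : injective (mul^~ x).
Proof. by move=> y y' E; rewrite -(mulgK y x) E mulgK. Qed.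
Lemma invg_unique x y : mul x y = e -> inv x = y.
Proof. by move=> E; rewrite -(mulKg x y) E mulg1. Qed.
Lemma invgK x : inv (inv x) = x.
Proof. exact: invg_unique (mulVg x). Qed.
Lemma invMg x y : inv (mul x y) = mul (inv y) (inv x).
Proof. by apply: invg_unique; rewrite -mulgA mulKVg mulgV. Qed.
Lemma invg1 : inv e = e.
Proof. exact: invg_unique (mul1g e). Qed.

Lemma is_group_rev : is_group (fun x y => mul y x) e inv.
Proof. by split=> [x y z | x | x]; rewrite ?mulgA ?mul1g ?mulg1 ?mulVg ?mulgV. Qed.

End GroupTheory.

Lemma op_invE (G : Type) (e : G) (op : G -> G -> G) (iv : G -> G) :
  is_group op e iv -> op_inv e op =1 iv.
Proof.
move=> Hop g; symmetry; apply: (invg_unique Hop).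
have [] // := epsilon_spec (inhabits e) (fun h => op g h = e /\ op h g = e).
by exists (iv g); rewrite (mulgV Hop) (mulVg Hop).
Qed.

Lemma is_group_op_inv (G : Type) (e : G) (op : G -> G -> G) (iv : G -> G) :
  is_group op e iv -> is_group op e (op_inv e op).
Proof.
move=> Hop; have invE := op_invE Hop.
by case: Hop => opA op1 opV; split=> // x; rewrite invE.
Qed.

Definition brace_law (B : Type) (add : B -> B -> B) (neg : B -> B) (o : B -> B -> B) :=
  forall a b c, o a (add b c) = add (o a b) (add (neg a) (o a c)).

Definition brace_sol (B : Type) (add : B -> B -> B) (neg : B -> B) (o : B -> B -> B)
    (ci : B -> B) (p : B * B) : B * B :=
  let '(g, h) := p in let u := add (neg g) (o g h) in (u, o (o (ci u) g) h).

Section SkewBrace.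
Variables (B : Type) (z : B) (add : B -> B -> B) (neg : B -> B).
Variables (o : B -> B -> B) (ci : B -> B).
Hypotheses (HA : is_group add z neg) (HO : is_group o z ci) (Hbrace : brace_law add neg o).

Local Notation R := (brace_sol add neg o ci).
Local Notation R' := (brace_sol (fun x y => add y x) neg o ci).

Lemma brace_law_rev : brace_law (fun x y => add y x) neg o.
Proof. by move=> a b c; rewrite Hbrace !(mulgA HA). Qed.

Definition lam a b := add (neg a) (o a b).
Definition tau b a := o (o (ci (lam a b)) a) b.

Lemma brace_solE a b : R (a, b) = (lam a b, tau b a).
Proof. by []. Qed.

Lemma lamg1 a : lam a z = z.
Proof. by rewrite /lam (mulg1 HO) (mulVg HA). Qed.
Lemma lam1g b : lam z b = b.
Proof. by rewrite /lam (invg1 HA) (mul1g HO) (mul1g HA). Qed.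
Lemma lamD a b c : lam a (add b c) = add (lam a b) (lam a c).
Proof. by rewrite /lam Hbrace !(mulgA HA). Qed.
Lemma lamN a b : lam a (neg b) = neg (lam a b).
Proof. by symmetry; apply: (invg_unique HA); rewrite -lamD (mulgV HA) lamg1. Qed.
Lemma lamM a b c : lam (o a b) c = lam a (lam b c).
Proof.
rewrite [lam b c]/lam lamD lamN /lam (invMg HA) (invgK HA).
by rewrite -(mulgA HO) -(mulgA HA) (mulKVg HA).
Qed.
Lemma lamK a b : lam (ci a) (lam a b) = b.
Proof. by rewrite -lamM (mulVg HO) lam1g. Qed.
Lemma lamKV a b : lam a (lam (ci a) b) = b.
Proof. by rewrite -lamM (mulgV HO) lam1g. Qed.
Lemma lam_inj a : injective (lam a).
Proof. by move=> b b' E; rewrite -(lamK a b) E lamK. Qed.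
Lemma o_lam a b : o a b = add a (lam a b).
Proof. by rewrite /lam (mulKVg HA). Qed.
Lemma o_lam_tau a b : o (lam a b) (tau b a) = o a b.
Proof. by rewrite /tau !(mulgA HO) (mulgV HO) (mul1g HO). Qed.
Lemma lam_lam_tau a b :
  lam (lam a b) (tau b a) = add (neg (lam a b)) (add a (lam a b)).
Proof. by rewrite {1}/lam o_lam_tau o_lam. Qed.

Lemma ybe_left a b c : lam (lam a b) (lam (tau b a) c) = lam a (lam b c).
Proof. by rewrite -lamM o_lam_tau lamM. Qed.

Lemma ybe_middle a b c :
  tau (lam (tau b a) c) (lam a b) = lam (tau (lam b c) a) (tau c b).
Proof.
(* Under [lam (lam a (lam b c))] both sides become [-λ_a λ_b c + λ_a b + λ_a λ_b c]. *)
apply: (lam_inj (a := lam a (lam b c))).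
by rewrite -{1}ybe_left lam_lam_tau !ybe_left lam_lam_tau lamD lamN lamD.
Qed.

Lemma ybe_right a b c : tau c (tau b a) = tau (tau c b) (tau (lam b c) a).
Proof.
(* Both triples have [o]-product [a o b o c] and the same first two components. *)
have lhsE : o (o (lam (lam a b) (lam (tau b a) c)) (tau (lam (tau b a) c) (lam a b)))
    (tau c (tau b a)) = o (o a b) c.
  by rewrite o_lam_tau -(mulgA HO) o_lam_tau (mulgA HO) o_lam_tau.
have rhsE : o (o (lam a (lam b c)) (lam (tau (lam b c) a) (tau c b)))
    (tau (tau c b) (tau (lam b c) a)) = o a (o b c).
  rewrite -(mulgA HO) (o_lam_tau (tau (lam b c) a)) (mulgA HO).
  by rewrite o_lam_tau -(mulgA HO) o_lam_tau.
apply: (mulgI HO (x := o (lam a (lam b c)) (lam (tau (lam b c) a) (tau c b)))).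
by rewrite rhsE -ybe_left -ybe_middle lhsE (mulgA HO).
Qed.

Lemma brace_sol_ybe : is_YBE_solution R.
Proof.
move=> [[a b] c]; rewrite /R12 /R23.
do 3 (rewrite ?brace_solE; cbv beta iota zeta).
by rewrite ybe_left ybe_middle ybe_right.
Qed.

Lemma ci_tau a b : add (ci (tau b a)) (ci b) = ci (o a b).
Proof.
have ab_a : o (ci (o a b)) a = ci b.
  by rewrite (invMg HO) -(mulgA HO) (mulVg HO) (mulg1 HO).
rewrite /tau -(mulgA HO) (invMg HO) (invgK HO) o_lam -lamM ab_a.
by rewrite /lam (mulVg HO) (mulg1 HA) -(mulgA HA) (mulVg HA) (mulg1 HA).
Qed.

(* For [w = tau b a], [ci_tau] reads [ci w + ci b = ci (a o b)]; solve for [a]. *)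
Definition tau_inv b w := o (ci (add (ci w) (ci b))) (ci b).

Lemma tau_invK b : cancel (tau b) (tau_inv b).
Proof. by move=> a; rewrite /tau_inv ci_tau (invgK HO) (mulgK HO). Qed.

Lemma tau_invKV b : cancel (tau_inv b) (tau b).
Proof.
move=> w; apply: (can_inj (invgK HO)); apply: (mulIg HA (x := ci b)).
by rewrite ci_tau /tau_inv (mulgKV HO) (invgK HO).
Qed.

Lemma brace_sol_nondeg : non_degenerate R.
Proof.
split=> x; [exists (lam (ci x)) | exists (tau_inv x)] => y; rewrite brace_solE /=.
- exact: lamK.
- exact: lamKV.
- exact: tau_invK.
- exact: tau_invKV.
Qed.

Lemma brace_solK : cancel R R'.
Proof.
move=> [a b]; rewrite brace_solE /=.
have -> : add (o (lam a b) (tau b a)) (neg (lam a b)) = a.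
  by rewrite o_lam_tau /lam (invMg HA) (invgK HA) (mulgA HA) (mulgV HA) (mul1g HA).
by rewrite -(mulgA HO) o_lam_tau (mulKg HO).
Qed.

Lemma brace_sol_revK : cancel R' R.
Proof.
move=> [a b] /=; set u := add (o a b) (neg a).
have uv : o u (o (o (ci u) a) b) = o a b by rewrite -(mulgA HO) (mulKVg HO).
have nu_ab : add (neg u) (o a b) = a.
  by rewrite /u (invMg HA) (invgK HA) -(mulgA HA) (mulVg HA) (mulg1 HA).
by rewrite uv nu_ab -(mulgA HO) uv (mulKg HO).
Qed.

Lemma brace_sol_involutive : involutive_sol R <-> is_abelian_op add.
Proof.
split=> [Hinv x y | Hab [a b]].
- have := f_equal fst (Hinv (x, o (ci x) y)).
  rewrite !brace_solE /= lam_lam_tau /lam (mulKVg HO) (mulKVg HA) (invMg HA) (invgK HA).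
  by move=> E; apply: (mulgI HA (x := neg y)); rewrite (mulKg HA) (mulgA HA) E.
- have lamLT : lam (lam a b) (tau b a) = a.
    by rewrite lam_lam_tau (Hab a) (mulKg HA).
  by rewrite !brace_solE lamLT /tau lamLT -(mulgA HO) o_lam_tau (mulKg HO).
Qed.

Lemma brace_sol_rev_involutive : involutive_sol R -> R' = R.
Proof.
by move=> Hinv; apply: functional_extensionality => p; rewrite -{1}(Hinv p) brace_solK.
Qed.

End SkewBrace.

Section ModuloCentre.
Variables (G : Type) (mul : G -> G -> G) (e : G) (inv : G -> G).
Hypothesis HG : is_group mul e inv.

Local Notation mulgA := (mulgA HG).
Local Notation mul1g := (mul1g HG).
Local Notation mulg1 := (mulg1 HG).
Local Notation mulVg := (mulVg HG).
Local Notation mulgV := (mulgV HG).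
Local Notation mulKg := (mulKg HG).
Local Notation mulKVg := (mulKVg HG).
Local Notation mulgK := (mulgK HG).
Local Notation mulgKV := (mulgKV HG).
Local Notation invgK := (invgK HG).
Local Notation invMg := (invMg HG).
Local Notation invg1 := (invg1 HG).

Lemma central1 : central mul e.
Proof. by move=> x; rewrite mul1g mulg1. Qed.
Lemma centralM a b : central mul a -> central mul b -> central mul (mul a b).
Proof. by move=> Ca Cb x; rewrite -mulgA Cb mulgA Ca mulgA. Qed.
Lemma centralV a : central mul a -> central mul (inv a).
Proof. by move=> Ca x; apply: (mulgI HG (x := a)); rewrite mulKVg mulgA Ca mulgK. Qed.

Definition congZ x y := central mul (mul (inv x) y).
Definition commZ x y := congZ (mul x y) (mul y x).

Lemma congZ_refl x : congZ x x.
Proof. by rewrite /congZ mulVg; apply: central1. Qed.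
Lemma congZ_sym x y : congZ x y -> congZ y x.
Proof. by move/centralV; rewrite /congZ invMg invgK. Qed.
Lemma congZ_trans x y w : congZ x y -> congZ y w -> congZ x w.
Proof. by move=> Cxy Cyw; have := centralM Cxy Cyw; rewrite -mulgA mulKVg. Qed.

Definition inner u x := mul (mul u x) (inv u).

Lemma innerM u v x : inner (mul u v) x = inner u (inner v x).
Proof. by rewrite /inner invMg !mulgA. Qed.
Lemma inner_mul u x y : inner u (mul x y) = mul (inner u x) (inner u y).
Proof. by rewrite /inner !mulgA mulgKV. Qed.
Lemma inner1g x : inner e x = x.
Proof. by rewrite /inner mul1g invg1 mulg1. Qed.
Lemma innerg1 u : inner u e = e.
Proof. by rewrite /inner mulg1 mulgV. Qed.
Lemma innerKV u : cancel (inner (inv u)) (inner u).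
Proof. by move=> x; rewrite -innerM mulgV inner1g. Qed.
Lemma inner_by_central u x : central mul u -> inner u x = x.
Proof. by move=> Cu; rewrite /inner Cu mulgK. Qed.
Lemma inner_of_central u x : central mul x -> inner u x = x.
Proof. by move=> Cx; rewrite /inner -Cx mulgK. Qed.

Lemma inner_congZ u v : congZ u v -> inner u =1 inner v.
Proof.
by move=> Cuv x; rewrite -[in RHS](mulKVg u v) innerM [inner (mul _ _) x]inner_by_central.
Qed.

Lemma congZ_mul x x' y y' : congZ x x' -> congZ y y' -> congZ (mul x y) (mul x' y').
Proof.
move=> Cx Cy; rewrite /congZ invMg -mulgA (mulgA (inv x)) mulgA -(Cx (inv y)) -mulgA.
exact: centralM.
Qed.

Lemma congZ_inv x y : congZ x y -> congZ (inv x) (inv y).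
Proof.
move=> Cxy; rewrite /congZ invgK.
have -> : mul x (inv y) = inner x (inv (mul (inv x) y)).
  by rewrite /inner invMg invgK mulgA mulgK.
by rewrite inner_of_central //; apply: centralV.
Qed.

#[local] Instance congZ_equiv : Equivalence congZ.
Proof. by split; [exact: congZ_refl | exact: congZ_sym | exact: congZ_trans]. Qed.
#[local] Instance mul_congZ : Proper (congZ ==> congZ ==> congZ) mul.
Proof. by move=> x x' Cx y y' Cy; apply: congZ_mul. Qed.
#[local] Instance inv_congZ : Proper (congZ ==> congZ) inv.
Proof. by move=> x y; apply: congZ_inv. Qed.

Lemma commZ_sym x y : commZ x y -> commZ y x.
Proof. exact: congZ_sym. Qed.

Lemma commZ_mull x x' y : commZ x y -> commZ x' y -> commZ (mul x x') y.
Proof.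
rewrite /commZ => Cx Cx'; rewrite -mulgA Cx' mulgA Cx -mulgA; reflexivity.
Qed.

Lemma commZ_iter a b n : commZ a b -> commZ (ssrnat.iter n (mul a) e) b.
Proof.
move=> Cab; elim: n => [|n IH] /=; last exact: commZ_mull.
by rewrite /commZ mul1g mulg1; reflexivity.
Qed.

Lemma congZ_mulACA a b c d : commZ b c ->
  congZ (mul (mul a b) (mul c d)) (mul (mul a c) (mul b d)).
Proof.
move=> Cbc; rewrite -!mulgA (mulgA b).
by setoid_rewrite (Cbc : congZ _ _); rewrite -!mulgA; reflexivity.
Qed.

Lemma commZV x y : commZ x y -> commZ (inv y) (inv x).
Proof. by rewrite /commZ -!invMg; apply: congZ_inv. Qed.

Lemma commZ_commg x y : central mul (Defs.commg mul inv y x) -> commZ x y.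
Proof. by rewrite /commZ /congZ invMg. Qed.

(* [circ mul e inv psi a] unfolds to [twist (fun g => psi (expr_act mul e inv a g))]. *)
Definition twist (c : G -> G) x y := mul (mul (mul x (c x)) y) (inv (c x)).
Definition twist_inv (c : G -> G) x := inner (inv (c x)) (inv x).

Lemma twistE (c : G -> G) x y : twist c x y = mul x (inner (c x) y).
Proof. by rewrite /twist /inner !mulgA. Qed.

Section Twist.
Variable c : G -> G.
Hypothesis c_morphZ : forall x y, congZ (c (mul x y)) (mul (c x) (c y)).
Hypothesis c_commZ : forall x y, commZ (c x) (c y).

Lemma c1Z : congZ (c e) e.
Proof.
rewrite -[X in congZ X _](mulKg (c e) (c e)).
by setoid_rewrite <- (c_morphZ e e); rewrite mulg1 mulVg; reflexivity.
Qed.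

Lemma c_invZ x : congZ (c (inv x)) (inv (c x)).
Proof.
rewrite -[X in congZ X _](mulKg (c x)).
by setoid_rewrite <- (c_morphZ x (inv x)); rewrite mulgV c1Z mulg1; reflexivity.
Qed.

Lemma c_innerZ u x : congZ (c (inner u x)) (c x).
Proof.
rewrite /inner; setoid_rewrite c_morphZ; setoid_rewrite c_morphZ.
setoid_rewrite (c_commZ u x : congZ _ _); setoid_rewrite c_invZ.
by rewrite -mulgA mulgV mulg1; reflexivity.
Qed.

Lemma c_twistZ (f : G -> G) x y : congZ (c (twist f x y)) (mul (c x) (c y)).
Proof.
by rewrite twistE; setoid_rewrite c_morphZ; setoid_rewrite c_innerZ; reflexivity.
Qed.

Lemma c_twist_invZ x : congZ (c (twist_inv c x)) (inv (c x)).
Proof. by rewrite /twist_inv; setoid_rewrite c_innerZ; apply: c_invZ. Qed.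

Lemma is_group_twist : is_group (twist c) e (twist_inv c).
Proof.
split=> [x y w | x | x].
- rewrite [twist c (twist c x y) w]twistE (inner_congZ (c_twistZ c x y)) !twistE.
  by rewrite inner_mul innerM mulgA.
- by rewrite !twistE (inner_congZ c1Z) inner1g mul1g innerg1 mulg1.
- rewrite !twistE (inner_congZ (c_twist_invZ x)) /twist_inv innerKV mulgV.
  by rewrite -inner_mul mulVg innerg1.
Qed.

Lemma twist_invl x w : twist c (twist_inv c x) w = inner (inv (c x)) (mul (inv x) w).
Proof. by rewrite twistE (inner_congZ (c_twist_invZ x)) /twist_inv -inner_mul. Qed.

Variable d : G -> G.
Hypothesis cross_commZ : forall x y, commZ (d x) (c y).

Lemma twist_brace_law : brace_law (twist c) (op_inv e (twist c)) (twist d).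
Proof.
move=> g h k; rewrite (op_invE is_group_twist) twist_invl.
set P := twist d g h.
have conjZ : congZ (mul (mul (c P) (inv (c g))) (d g)) (mul (d g) (c h)).
  rewrite /P; setoid_rewrite (c_twistZ d g h).
  setoid_rewrite (c_commZ g h : congZ _ _); rewrite mulgK.
  exact: commZ_sym.
rewrite !twistE mulKg -!innerM (inner_congZ conjZ) inner_mul innerM.
by rewrite /P twistE mulgA.
Qed.

End Twist.

Lemma endo1 f : is_endo mul f -> f e = e.
Proof. by move=> Hf; apply: (mulgI HG (x := f e)); rewrite -Hf !mulg1. Qed.

Lemma endoV f x : is_endo mul f -> f (inv x) = inv (f x).
Proof. by move=> Hf; symmetry; apply: (invg_unique HG); rewrite -Hf mulgV (endo1 Hf). Qed.

Lemma endo_zpow f x n : is_endo mul f ->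
  f (zpow mul e inv x n) = zpow mul e inv (f x) n.
Proof.
move=> Hf.
have f_iter m : f (ssrnat.iter m (mul x) e) = ssrnat.iter m (mul (f x)) e.
  by elim: m => [|m IH] /=; rewrite ?(endo1 Hf) // Hf IH.
by case: n => [|p|p] /=; rewrite ?(endo1 Hf) ?(endoV _ Hf) ?f_iter.
Qed.

Lemma iter_mulZ a b n : commZ a b ->
  congZ (ssrnat.iter n (mul (mul a b)) e)
        (mul (ssrnat.iter n (mul a) e) (ssrnat.iter n (mul b) e)).
Proof.
move=> Cab; elim: n => [|n IH] /=; first by rewrite mulg1; reflexivity.
by setoid_rewrite IH; apply/congZ_mulACA/commZ_sym/commZ_iter.
Qed.

Lemma zpow_mulZ a b n : commZ a b ->
  congZ (zpow mul e inv (mul a b) n) (mul (zpow mul e inv a n) (zpow mul e inv b n)).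
Proof.
move=> Cab; case: n => [|p|p] /=; first by rewrite mulg1; reflexivity.
  exact: iter_mulZ.
setoid_rewrite (iter_mulZ _ Cab); rewrite invMg.
exact: (commZV (commZ_sym (commZ_iter _ (commZ_sym (commZ_iter _ Cab))))).
Qed.

Lemma expr_act_morphZ (psi : G -> G) (al : expr G) x y :
  is_endo mul psi -> (forall a b, commZ (psi a) (psi b)) -> expr_wf mul al ->
  congZ (psi (expr_act mul e inv al (mul x y)))
        (mul (psi (expr_act mul e inv al x)) (psi (expr_act mul e inv al y))).
Proof.
move=> Hpsi psiZ; elim: al => [|[n phi] al IH] wf_al /=.
  by rewrite (endo1 Hpsi) mulg1; reflexivity.
have Hphi : is_endo mul phi by apply: (wf_al (n, phi)); left.
have phi_morphZ : congZ (psi (phi (zpow mul e inv (mul x y) n)))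
    (mul (psi (phi (zpow mul e inv x n))) (psi (phi (zpow mul e inv y n)))).
  rewrite !(endo_zpow _ _ Hphi) !(endo_zpow _ _ Hpsi) Hphi Hpsi.
  exact: zpow_mulZ.
rewrite !Hpsi; setoid_rewrite phi_morphZ.
setoid_rewrite (IH (fun q Hq => wf_al q (or_intror Hq))).
exact: congZ_mulACA.
Qed.

End ModuloCentre.

Theorem corollary3p5
  (G : Type) (mul : G -> G -> G) (e : G) (inv : G -> G)
  (HG : is_group mul e inv)
  (Hnonab : ~ is_abelian_op mul)
  (t : nat) (psi : 'I_t -> G -> G)
  (Hpsi_endo : forall k, is_endo mul (psi k))
  (Hpsi_der : forall k x, derived mul e inv x -> central mul (psi k x))
  (Hpsi_comm : forall k l x,
      comm_sub mul e inv (image_of (psi k)) (image_of (psi l)) x -> central mul x)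
  (i j : 'I_t) (alpha beta : expr G)
  (Halpha : expr_wf mul alpha) (Hbeta : expr_wf mul beta) :
  let oi := circ mul e inv (psi i) alpha in
  let oj := circ mul e inv (psi j) beta in
  let tl := op_inv e oi in
  let bar := op_inv e oj in
  let R := fun p : G * G =>
    let '(g, h) := p in
    let u := oi (tl g) (oj g h) in (u, oj (oj (bar u) g) h) in
  let R' := fun p : G * G =>
    let '(g, h) := p in
    let u := oi (oj g h) (tl g) in (u, oj (oj (bar u) g) h) in
  (is_YBE_solution R /\ is_YBE_solution R') /\
  (non_degenerate R /\ non_degenerate R') /\
  ((forall p, R (R' p) = p) /\ (forall p, R' (R p) = p)) /\
  (involutive_sol R <-> is_abelian_op oi) /\
  (involutive_sol R -> R' = R).
Proof.
move=> oi oj tl bar R R'.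
have psiZ (k l : 'I_t) (a b : G) : commZ mul inv (psi k a) (psi l b).
  apply: (commZ_commg HG); apply: (Hpsi_comm l k).
  rewrite -[Defs.commg _ _ _ _](mulg1 HG).
  by apply: cs_comm; [exists b | exists a | apply: cs_one].
pose c g := psi i (expr_act mul e inv alpha g).
pose d g := psi j (expr_act mul e inv beta g).
have c_morphZ x y := expr_act_morphZ HG x y (Hpsi_endo i) (psiZ i i) Halpha.
have d_morphZ x y := expr_act_morphZ HG x y (Hpsi_endo j) (psiZ j j) Hbeta.
have c_commZ x y : commZ mul inv (c x) (c y) := psiZ i i _ _.
have d_commZ x y : commZ mul inv (d x) (d y) := psiZ j j _ _.
have dc_commZ x y : commZ mul inv (d x) (c y) := psiZ j i _ _.
have Gi : is_group oi e tl := is_group_op_inv (is_group_twist HG c_morphZ c_commZ).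
have Gj : is_group oj e bar := is_group_op_inv (is_group_twist HG d_morphZ d_commZ).
have Hb : brace_law oi tl oj := twist_brace_law HG c_morphZ c_commZ dc_commZ.
have Gi' := is_group_rev Gi; have Hb' := brace_law_rev Gi Hb.
split; [split | split; [split | split; [split | split]]].
- exact: brace_sol_ybe Gi Gj Hb.
- exact: brace_sol_ybe Gi' Gj Hb'.
- exact: brace_sol_nondeg Gi Gj Hb.
- exact: brace_sol_nondeg Gi' Gj Hb'.
- exact: brace_sol_revK Gi Gj.
- exact: brace_solK Gi Gj.
- exact: brace_sol_involutive Gi Gj.
- exact: brace_sol_rev_involutive Gi Gj.
Qed.
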